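(* Let the exposure be binary, $\mathscr{X}=\{0,1\}$. For each $x\in\mathscr{X}$ let $\mathbf{M}(x)\in\mathbb{R}^p$ be the potential mediator vector, assumed mean-zero multivariate Gaussian with covariance matrix $\boldsymbol{\Sigma}(x)$, and let $\mathcal{G}(x)$ be the corresponding Gaussian covariance graph on vertices $\{1,\dots,p\}$ (an edge $(j,k)$, $j\neq k$, is absent iff $\sigma_{jk}(x)=0$), so that graphs and covariance matrices are in one-to-one correspondence. For a graph $\boldsymbol{\mathcal{G}}$ with covariance matrix $\boldsymbol{\Sigma}$, let $Y(x,\boldsymbol{\mathcal{G}})\in\mathbb{R}$ be the potential outcome under exposure $x$ and mediator graph $\boldsymbol{\mathcal{G}}$. Let $X$ be the actual exposure and $\mathbf{W}\in\mathbb{R}^q$ observed confounders. Assume: (A1) the stable unit treatment value assumption (SUTVA); (A2) $\mathbb{P}(X=x)>0$ for all $x\in\mathscr{X}$; (A3) $\{Y(1,\boldsymbol{\mathcal{G}}),Y(0,\boldsymbol{\mathcal{G}}),\mathbf{M}(1),\mathbf{M}(0)\}$ is independent of $X$ given $\mathbf{W}$, for every graph $\boldsymbol{\mathcal{G}}$; (A4) $Y(x,\boldsymbol{\mathcal{G}})$ is independent of $\mathbf{M}(x)$ given $X=x,\mathbf{W}$, for every $x$ and every graph $\boldsymbol{\mathcal{G}}$; (A5) there is $\boldsymbol{\theta}\in\mathbb{R}^p$ with $\|\boldsymbol{\theta}\|_2=1$ and coefficients $\alpha_0,\alpha\in\mathbb{R}$, $\boldsymbol{\phi}_1\in\mathbb{R}^q$,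 $\gamma_0,\gamma,\beta\in\mathbb{R}$, $\boldsymbol{\phi}_2\in\mathbb{R}^q$ such that $\log(\boldsymbol{\theta}^\top\boldsymbol{\Sigma}(x)\boldsymbol{\theta})=\alpha_0+\alpha x+\mathbf{W}^\top\boldsymbol{\phi}_1+\eta$ and $Y(x,\boldsymbol{\mathcal{G}})=\gamma_0+\gamma x+\beta\log(\boldsymbol{\theta}^\top\boldsymbol{\Sigma}\boldsymbol{\theta})+\mathbf{W}^\top\boldsymbol{\phi}_2+\epsilon$ (with $\boldsymbol{\Sigma}$ the covariance matrix corresponding to $\boldsymbol{\mathcal{G}}$), where $\eta,\epsilon$ are independent mean-zero errors. Then $\tau_{\mathrm{ATE}}:=\mathbb{E}\{Y(1,\mathcal{G}(1))-Y(0,\mathcal{G}(0))\}=\gamma+\alpha\beta$; $\tau_{\mathrm{AIE}}(x):=\mathbb{E}\{Y(x,\mathcal{G}(1))-Y(x,\mathcal{G}(0))\}=\alpha\beta$ for $x=0,1$; $\tau_{\mathrm{ADE}}(x):=\mathbb{E}\{Y(1,\mathcal{G}(x))-Y(0,\mathcal{G}(x))\}=\gamma$ for $x=0,1$.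
   Context: A Gaussian covariance graph model identifies a graph on $p$ vertices with the covariance matrix of a mean-zero Gaussian vector, where a missing edge between two vertices corresponds to zero covariance (marginal independence) between the corresponding variables. $\mathcal{G}(x)$ denotes the potential mediator graph under exposure $x$, and $Y(x,\mathcal{G}(x'))$ the potential outcome under exposure $x$ with the mediator graph set to its value under exposure $x'$. *)

From HB Require Import structures.
From mathcomp Require Import all_boot all_order all_algebra.
From mathcomp Require Import all_classical all_reals all_analysis.
Set Implicit Arguments. Unset Strict Implicit. Unset Printing Implicit Defensive.
Import Order.TTheory GRing.Theory Num.Theory.
Local Open Scope classical_set_scope.
Local Open Scope ring_scope.

Section defs.
Context {d : measure_display} {T : measurableType d} {R : realType}.

Definition preimages (I : Type) (A : I -> T -> R) : set (set T) :=
  [set S | exists i U, measurable U /\ S = A i @^-1` U].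

Definition sigma_of (I : Type) (A : I -> T -> R) : set (set T) :=
  <<s preimages A >>.

(** Conditional independence of the families A and B given the family C,
    under P conditioned on the event E (E = setT: unconditional):
    for every event SA in sigma(A) there is a sigma(C)-measurable psi
    (a version of P(SA | C)) which is also a version of P(SA | B, C), i.e.
    P(SA ∩ SB ∩ SC ∩ E) = ∫_{SB ∩ SC ∩ E} psi dP  for all SB in sigma(B),
    SC in sigma(C). *)
Definition cond_indep (P : probability T R) (E : set T)
  (I J K : Type) (A : I -> T -> R) (B : J -> T -> R) (C : K -> T -> R) : Prop :=
  forall SA, sigma_of A SA ->
    exists psi : T -> R,
      (forall U, measurable U -> sigma_of C (psi @^-1` U)) /\
      (forall SB SC, sigma_of B SB -> sigma_of C SC ->
         P (SA `&` SB `&` SC `&` E) =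
         (\int[P]_(w in SB `&` SC `&` E) (psi w)%:E)%E).

Definition indep2 (P : probability T R) (U V : T -> R) : Prop :=
  forall A B : set R, measurable A -> measurable B ->
    P (U @^-1` A `&` V @^-1` B) = (P (U @^-1` A) * P (V @^-1` B))%E.
End defs.

(** A Gaussian covariance graph on p vertices is identified with its
    covariance matrix (one-to-one correspondence); a valid covariance
    matrix is symmetric positive definite. *)
Definition is_cov (R : realType) (p : nat) (S : 'M[R]_p) : Prop :=
  S^T = S /\ forall v : 'cV[R]_p, v != 0 -> 0 < (v^T *m S *m v) 0 0.

Definition cov_graph (R : realType) (p : nat) (S : 'M[R]_p) : rel 'I_p :=
  fun j k => (j != k) && (S j k != 0).

Definition quadf (R : realType) (p : nat) (theta : 'cV[R]_p) (S : 'M[R]_p) : R :=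
  (theta^T *m S *m theta) 0 0.

From HB Require Import structures.
From mathcomp Require Import all_boot all_order all_algebra.
From mathcomp Require Import all_classical all_reals all_analysis.
From mathcomp Require Import ring.
Import Order.TTheory GRing.Theory Num.Theory.
Local Open Scope classical_set_scope.
Local Open Scope ring_scope.

(* In model (A5) the outcome is affine in the exposure and in the log-variance
   [ln (theta^T Sigma theta)] of the mediator, which is itself affine in the
   exposure.  Hence every contrast [Y(x, G(x')) - Y(z, G(z'))] equals
   [gamma (x - z) + alpha beta (x' - z')] pointwise: the confounder terms and
   the errors cancel, and its expectation is that constant. *)

Lemma expectation_pointwise_cst (d : measure_display) (T : measurableType d)
    (R : realType) (P : probability T R) (f : T -> R) (c : R) :
  (forall w, f w = c) -> ('E_P[f] = c%:E)%E.
Proof.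
move=> fc; have -> : f = cst c by apply: funext => w; rewrite fc.
exact: expectation_cst.
Qed.

Section linear_mediation_model.
Context {T : Type} {R : realType} {p q : nat}.
Context {W : 'I_q -> T -> R} {Sigma : bool -> T -> 'M[R]_p}.
Context {Y : bool -> 'M[R]_p -> T -> R}.
Context {theta : 'cV[R]_p} {alpha0 alpha gamma0 gamma beta : R}.
Context {phi1 phi2 : 'I_q -> R} {eta eps : T -> R}.
Hypothesis Sigma_cov : forall x w, is_cov (Sigma x w).
Hypothesis med_model : forall (x : bool) w,
  ln (quadf theta (Sigma x w)) =
    alpha0 + alpha * x%:R + \sum_i W i w * phi1 i + eta w.
Hypothesis out_model : forall (x : bool) (S : 'M[R]_p) w, is_cov S ->
  Y x S w = gamma0 + gamma * x%:R + beta * ln (quadf theta S)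
            + \sum_i W i w * phi2 i + eps w.

Lemma potential_outcomeE (x x' : bool) w :
  Y x (Sigma x' w) w =
    gamma0 + gamma * x%:R
    + beta * (alpha0 + alpha * x'%:R + \sum_i W i w * phi1 i + eta w)
    + \sum_i W i w * phi2 i + eps w.
Proof. by rewrite out_model // med_model. Qed.

Lemma potential_outcome_contrast (x x' z z' : bool) w :
  Y x (Sigma x' w) w - Y z (Sigma z' w) w =
    gamma * (x%:R - z%:R) + alpha * beta * (x'%:R - z'%:R).
Proof. rewrite !potential_outcomeE; ring. Qed.

End linear_mediation_model.

Theorem theorem1
  (d : measure_display) (T : measurableType d) (R : realType)
  (P : probability T R) (p q : nat)
  (* actual exposure, confounders *)
  (X : T -> R) (W : 'I_q -> T -> R)
  (* potential mediator: covariance matrix (<-> graph) under exposure x *)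
  (Sigma : bool -> T -> 'M[R]_p)
  (* potential outcomes Y(x, G), G given by its covariance matrix *)
  (Y : bool -> 'M[R]_p -> T -> R)
  (* observed mediator and outcome *)
  (Sobs : T -> 'M[R]_p) (Yobs : T -> R)
  (* model parameters and errors *)
  (theta : 'cV[R]_p) (alpha0 alpha gamma0 gamma beta : R)
  (phi1 phi2 : 'I_q -> R) (eta eps : T -> R)
  (* measurability and well-formedness *)
  (mX : measurable_fun setT X)
  (mW : forall i, measurable_fun setT (W i))
  (mSigma : forall x j k, measurable_fun setT (fun w => Sigma x w j k))
  (mY : forall x S, measurable_fun setT (Y x S))
  (meta : measurable_fun setT eta) (meps : measurable_fun setT eps)
  (Xbin : forall w, X w = 0 \/ X w = 1)
  (Sigma_cov : forall x w, is_cov (Sigma x w))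
  (* (A1) SUTVA / consistency *)
  (A1 : forall w, Sobs w = Sigma (X w == 1) w /\
                  Yobs w = Y (X w == 1) (Sigma (X w == 1) w) w)
  (* (A2) positivity *)
  (A2 : forall x : bool, (0 < P [set w | X w = x%:R])%E)
  (* (A3) {Y(1,G), Y(0,G), M(1), M(0)} independent of X given W *)
  (A3 : forall S : 'M[R]_p, is_cov S ->
     cond_indep P setT
       (fun i : bool + (bool * 'I_p * 'I_p) =>
          match i with
          | inl x => Y x S
          | inr (x, j, k) => fun w => Sigma x w j k
          end)
       (fun _ : unit => X) W)
  (* (A4) Y(x,G) independent of M(x) given X = x, W *)
  (A4 : forall (x : bool) (S : 'M[R]_p), is_cov S ->
     cond_indep P [set w | X w = x%:R]
       (fun _ : unit => Y x S)
       (fun jk : 'I_p * 'I_p => fun w => Sigma x w jk.1 jk.2) W)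
  (* (A5) model *)
  (theta_norm : Num.sqrt (\sum_i theta i 0 ^+ 2) = 1)
  (eta_int : P.-integrable setT (EFin \o eta))
  (eps_int : P.-integrable setT (EFin \o eps))
  (eta_mean : ('E_P[eta] = 0)%E) (eps_mean : ('E_P[eps] = 0)%E)
  (eta_eps_indep : indep2 P eta eps)
  (med_model : forall (x : bool) w,
     ln (quadf theta (Sigma x w)) =
       alpha0 + alpha * x%:R + \sum_i W i w * phi1 i + eta w)
  (out_model : forall (x : bool) (S : 'M[R]_p) w, is_cov S ->
     Y x S w = gamma0 + gamma * x%:R + beta * ln (quadf theta S)
               + \sum_i W i w * phi2 i + eps w) :
  ('E_P[fun w => (Y true (Sigma true w) w - Y false (Sigma false w) w)%R]
     = (gamma + alpha * beta)%:E)%E /\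
  (forall x : bool,
    ('E_P[fun w => (Y x (Sigma true w) w - Y x (Sigma false w) w)%R]
       = (alpha * beta)%:E)%E) /\
  (forall x : bool,
    ('E_P[fun w => (Y true (Sigma x w) w - Y false (Sigma x w) w)%R]
       = gamma%:E)%E).
Proof.
have contrast := potential_outcome_contrast Sigma_cov med_model out_model.
split; [|split] => [|x|x]; apply: expectation_pointwise_cst => w; rewrite contrast.
- by rewrite subr0 !mulr1.
- by rewrite subrr subr0 mulr0 add0r mulr1.
- by rewrite subrr subr0 mulr0 addr0 mulr1.
Qed.
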